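(* Let $q$ be a prime, let $c\in\mathbb{F}_q$, let $a_1,a_2,a_3\in\mathbb{F}_q\setminus\{0\}$, and let $\gamma_1,\gamma_2,\gamma_3$ be permutations of $\mathbb{F}_q$. If $\gamma_1(x_1)+\gamma_2(x_2)+\gamma_3(x_3)=c$ for all $x_1,x_2,x_3\in\mathbb{F}_q$ satisfying $a_1x_1+a_2x_2+a_3x_3=0$, then each $\gamma_i$ ($i=1,2,3$) is an affine transformation of $\mathbb{F}_q$, i.e. of the form $x\mapsto ux+w$ with $u,w\in\mathbb{F}_q$. *)

From mathcomp Require Import all_boot all_order all_algebra all_fingroup.
Set Implicit Arguments. Unset Strict Implicit. Unset Printing Implicit Defensive.
Import GRing.Theory.
Local Open Scope ring_scope.

Definition affine_map (F : pzRingType) (f : F -> F) : Prop :=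
  exists u w : F, forall x : F, f x = u * x + w.

From mathcomp Require Import all_boot all_order all_algebra all_fingroup.
From mathcomp Require Import ring.
Set Implicit Arguments. Unset Strict Implicit. Unset Printing Implicit Defensive.
Import GRing.Theory.
Local Open Scope ring_scope.

(* Substituting y_i = a_i x_i turns the hypothesis into the Pexider equation
   h1 y1 + h2 y2 + h3 (-(y1 + y2)) = c for all y1, y2.  Comparing instances of
   it shows that h1 - h1 0 is additive and that h2, h3 differ from it only by
   constants (up to a sign of the argument for h3).  Over F_q every element is
   a sum of ones, so an additive map is multiplication by its value at 1;
   hence all h_i, and therefore all g_i, are affine. *)

Lemma Fp_natr_val q (x : 'F_q) : x = (val x)%:R.
Proof. by apply/val_inj; rewrite /= Zp_nat /= modn_small. Qed.

Lemma Fp_additive_linear q (f : 'F_q -> 'F_q) :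
  {morph f : x y / x + y} -> forall x, f x = x * f 1.
Proof.
move=> fD; have f0 : f 0 = 0.
  by apply/(addrI (f 0)); rewrite -fD !addr0.
move=> x; rewrite (Fp_natr_val x); elim: (val x) => [|n IH].
  by rewrite mul0r f0.
by rewrite -natr1 fD IH mulrDl mul1r.
Qed.

Lemma affine_map_scale (F : comPzRingType) (f g : F -> F) (a : F) :
  affine_map f -> (forall x, g x = f (a * x)) -> affine_map g.
Proof.
move=> [u [w fE]] gE; exists (u * a), w => x.
by rewrite gE fE mulrA.
Qed.

Section Pexider.

Variables (V W : zmodType) (h1 h2 h3 : V -> W) (c : W).
Hypothesis pexider : forall y1 y2, h1 y1 + h2 y2 + h3 (- (y1 + y2)) = c.

Lemma pexider_h2 y : h2 y = h1 y - h1 0 + h2 0.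
Proof.
have e : h1 0 + h2 y = h1 y + h2 0.
  apply/(addIr (h3 (- y))); have := pexider y 0; have := pexider 0 y.
  by rewrite add0r addr0 => -> ->.
by rewrite addrAC -e addrAC subrr add0r.
Qed.

Lemma pexider_h3 y : h3 y = c - h1 (- y) - h2 0.
Proof. by rewrite -addrA -opprD -(pexider (- y) 0) addr0 opprK addrC addKr. Qed.

Lemma pexider_additive : {morph (fun y => h1 y - h1 0) : x y / x + y}.
Proof.
move=> x y /=.
have e : h1 (x + y) + h2 0 = h1 x + h2 y.
  apply/(addIr (h3 (- (x + y)))); rewrite pexider.
  by have := pexider (x + y) 0; rewrite addr0.
have h1D : h1 (x + y) = h1 x + (h1 y - h1 0).
  by rewrite -[h1 (x + y)](addrK (h2 0)) e pexider_h2 addrA addrK.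
by rewrite h1D addrAC.
Qed.

End Pexider.

Lemma Fp_pexider_affine q (h1 h2 h3 : 'F_q -> 'F_q) (c : 'F_q) :
  (forall y1 y2, h1 y1 + h2 y2 + h3 (- (y1 + y2)) = c) ->
  [/\ affine_map h1, affine_map h2 & affine_map h3].
Proof.
move=> pexider.
have lin := Fp_additive_linear (pexider_additive pexider).
set u := h1 1 - h1 0 in lin.
have h1E y : h1 y = u * y + h1 0 by rewrite mulrC -lin subrK.
split.
- by exists u, (h1 0).
- by exists u, (h2 0) => y; rewrite (pexider_h2 pexider) h1E addrK.
- exists u, (c - h1 0 - h2 0) => y.
  by rewrite (pexider_h3 pexider) h1E; ring.
Qed.

Theorem lemma4 (q : nat) (hq : prime q) (c a1 a2 a3 : 'F_q)
  (ha1 : a1 != 0) (ha2 : a2 != 0) (ha3 : a3 != 0)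
  (g1 g2 g3 : {perm 'F_q})
  (H : forall x1 x2 x3 : 'F_q, a1 * x1 + a2 * x2 + a3 * x3 = 0 ->
         g1 x1 + g2 x2 + g3 x3 = c) :
  affine_map (g1 : 'F_q -> 'F_q) /\ affine_map (g2 : 'F_q -> 'F_q)
  /\ affine_map (g3 : 'F_q -> 'F_q).
Proof.
pose h (g : {perm 'F_q}) (a y : 'F_q) := g (y / a).
have unscale (g : {perm 'F_q}) a : a != 0 -> affine_map (h g a) -> affine_map g.
  by move=> a0 /(affine_map_scale (a := a)); apply=> x; rewrite /h mulrC mulKf.
have [aff1 aff2 aff3] : [/\ affine_map (h g1 a1), affine_map (h g2 a2)
                          & affine_map (h g3 a3)].
  apply: (Fp_pexider_affine (c := c)) => y1 y2; apply: H.
  by rewrite !(mulrC _ (_ / _)) !divfK // subrr.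
split; first exact: (unscale _ _ ha1 aff1).
by split; [exact: (unscale _ _ ha2 aff2) | exact: (unscale _ _ ha3 aff3)].
Qed.
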